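(* The unimodal spi-logic $\mathsf{SPi}_{lin}=\mathsf{SPi}+\{p\to\Diamond p,\ \Diamond\Diamond p\to\Diamond p,\ \Diamond(p\wedge q)\wedge\Diamond(p\wedge r)\to\Diamond(p\wedge\Diamond q\wedge\Diamond r)\}$ is complete.
   Context: Unimodal setting: one diamond $\Diamond$. Sp-formulas: built from propositional variables and $\top$ by $\wedge$ and $\Diamond$; sp-implications $\sigma\to\tau$. A SLO is an algebra $(A,\wedge,\top,\Diamond)$ with $(A,\wedge,\top)$ a meet-semilattice with top and $\Diamond$ monotone; it validates $\sigma\to\tau$ if $\sigma[\mathfrak a]\le\tau[\mathfrak a]$ for all valuations. Frames $(W,R)$ with standard Kripke semantics. $\Sigma\models_{\mathsf{Kr}}\iota$ (resp. $\models_{\mathsf{SLO}}$): valid in every frame (resp. SLO) validating $\Sigma$. $\mathsf{SPi}+\Sigma=\{\iota\mid\Sigma\models_{\mathsf{SLO}}\iota\}$ is complete if $\Sigma\models_{\mathsf{Kr}}\iota\iff\Sigma\models_{\mathsf{SLO}}\iota$ for every sp-implication $\iota$. (The frames validating the three axioms are exactly the linear quasiorders.) *)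

From Stdlib Require Import List.
Import ListNotations.

Inductive spform : Type :=
| SVar : nat -> spform
| STop : spform
| SAnd : spform -> spform -> spform
| SDia : spform -> spform.

Record spimp : Type := SpImp { ante : spform; cons : spform }.

Record frame : Type := Frame { world : Type; rel : world -> world -> Prop }.

Fixpoint ksat (F : frame) (V : nat -> world F -> Prop) (w : world F) (phi : spform) : Prop :=
  match phi with
  | SVar n => V n w
  | STop => True
  | SAnd a b => ksat F V w a /\ ksat F V w b
  | SDia a => exists v, rel F w v /\ ksat F V v a
  end.

Definition frame_valid (F : frame) (i : spimp) : Prop :=
  forall (V : nat -> world F -> Prop) (w : world F), ksat F V w (ante i) -> ksat F V w (cons i).

Definition Kr_conseq (Sigma : list spimp) (i : spimp) : Prop :=
  forall F : frame, (forall j, In j Sigma -> frame_valid F j) -> frame_valid F i.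

Record SLO : Type := MkSLO {
  car : Type;
  smeet : car -> car -> car;
  stop : car;
  sdia : car -> car;
  smeetA : forall x y z, smeet x (smeet y z) = smeet (smeet x y) z;
  smeetC : forall x y, smeet x y = smeet y x;
  smeetI : forall x, smeet x x = x;
  smeet_top : forall x, smeet x stop = x;
  sdia_mono : forall x y, smeet x y = x -> smeet (sdia x) (sdia y) = sdia x
}.

Definition sle (A : SLO) (x y : car A) : Prop := smeet A x y = x.

Fixpoint seval (A : SLO) (a : nat -> car A) (phi : spform) : car A :=
  match phi with
  | SVar n => a n
  | STop => stop A
  | SAnd p q => smeet A (seval A a p) (seval A a q)
  | SDia p => sdia A (seval A a p)
  end.

Definition slo_valid (A : SLO) (i : spimp) : Prop :=
  forall a : nat -> car A, sle A (seval A a (ante i)) (seval A a (cons i)).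

Definition SLO_conseq (Sigma : list spimp) (i : spimp) : Prop :=
  forall A : SLO, (forall j, In j Sigma -> slo_valid A j) -> slo_valid A i.

Definition complete (Sigma : list spimp) : Prop :=
  forall i : spimp, Kr_conseq Sigma i <-> SLO_conseq Sigma i.

Definition p_ := SVar 0.
Definition q_ := SVar 1.
Definition r_ := SVar 2.

Definition Sigma_lin : list spimp :=
  [ SpImp p_ (SDia p_);
    SpImp (SDia (SDia p_)) (SDia p_);
    SpImp (SAnd (SDia (SAnd p_ q_)) (SDia (SAnd p_ r_)))
          (SDia (SAnd p_ (SAnd (SDia q_) (SDia r_)))) ].

From Stdlib Require Import List ListDec PeanoNat Lia FunctionalExtensionality PropExtensionality.
Import ListNotations.

(* Soundness holds because the subsets of a frame form an SLO that validates exactly the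
   implications valid on the frame.  For completeness, the chain (N, <=) validates the three
   axioms, so it suffices to show that every implication s -> t valid on (N, <=) holds in every
   SLO validating them; this goes by induction on t, for all s.  In the case t = <>t', if the
   top-level variables Q of t' all occur at top level in s, then s -> t' is valid on (N, <=).
   Otherwise follow s inwards through its diamonds, stopping at the arguments whose top-level
   variables include Q: these form the frontier Fr of s.  Putting in front of an arbitrary
   model a finite chain that realises s down to its frontier shows that Q /\ /\{<>u | u in Fr}
   -> t' is valid on (N, <=) (and that Fr is nonempty).  In the algebra s <= <>u for u in Fr
   by transitivity, and iterating the third axiom along Fr gives
   s <= <>(Q /\ /\{<>u | u in Fr}) <= <>t'. *)

Definition nat_chain : frame := Frame nat le.

Definition nat_entails (s t : spform) : Prop :=
  forall (V : nat -> nat -> Prop) (w : nat), ksat nat_chain V w s -> ksat nat_chain V w t.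

Fixpoint top_vars (s : spform) : list nat :=
  match s with
  | SVar n => [n]
  | STop | SDia _ => []
  | SAnd a b => top_vars a ++ top_vars b
  end.

Fixpoint conj_vars (Q : list nat) : spform :=
  match Q with [] => STop | k :: Q' => SAnd (SVar k) (conj_vars Q') end.

Fixpoint conj_dia (l : list spform) : spform :=
  match l with [] => STop | u :: l' => SAnd (SDia u) (conj_dia l') end.

Definition top_vars_incl_dec (t a : spform) :
  {incl (top_vars t) (top_vars a)} + {~ incl (top_vars t) (top_vars a)} :=
  incl_dec Nat.eq_dec (top_vars t) (top_vars a).

Lemma top_vars_conj_vars Q : top_vars (conj_vars Q) = Q.
Proof. induction Q as [|k Q IH]; simpl; [reflexivity|now rewrite IH]. Qed.

Lemma ksat_top_vars F V w s k : ksat F V w s -> In k (top_vars s) -> V k w.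
Proof.
  induction s as [n| |a IHa b IHb|a IHa]; simpl; intros Hs Hk; try contradiction.
  - now destruct Hk as [<-|[]].
  - destruct Hs; apply in_app_or in Hk as [Hk|Hk]; auto.
Qed.

Lemma ksat_conj_dia F V w l u :
  ksat F V w (conj_dia l) -> In u l -> exists v, rel F w v /\ ksat F V v u.
Proof.
  induction l as [|u' l IH]; simpl; [contradiction|].
  intros [Hu Hl] [<-|Hin]; auto.
Qed.

Lemma ksat_nat_down V s v w :
  w <= v -> ksat nat_chain V v s -> (forall k, In k (top_vars s) -> V k w) ->
  ksat nat_chain V w s.
Proof.
  induction s as [n| |a IHa b IHb|a IHa]; simpl; intros Hwv Hs Htop.
  - apply Htop; now left.
  - exact I.
  - destruct Hs as [Ha Hb]; split.
    + apply IHa; auto. intros k Hk; apply Htop, in_or_app; auto.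
    + apply IHb; auto. intros k Hk; apply Htop, in_or_app; auto.
  - destruct Hs as [u [Hvu Hu]]. exists u; split; [lia|exact Hu].
Qed.

Lemma ksat_nat_shift (V V' : nat -> nat -> Prop) K w :
  (forall k x, K <= x -> V' k x <-> V k (w + (x - K))) ->
  forall s x, K <= x -> ksat nat_chain V' x s <-> ksat nat_chain V (w + (x - K)) s.
Proof.
  intros HV s; induction s as [n| |a IHa b IHb|a IHa]; intros x Hx; simpl.
  - now apply HV.
  - tauto.
  - rewrite IHa, IHb by exact Hx. tauto.
  - split.
    + intros [v [Hxv Hv]]. exists (w + (v - K)). split; [lia|].
      apply IHa; [lia|exact Hv].
    + intros [y [Hy Hv]]. exists (K + (y - w)). split; [lia|].
      apply IHa; [lia|].
      now replace (w + (K + (y - w) - K)) with y by lia.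
Qed.

Lemma nat_entails_dia_incl s t :
  incl (top_vars t) (top_vars s) -> nat_entails s (SDia t) -> nat_entails s t.
Proof.
  intros Hincl Hst V w Hs.
  destruct (Hst V w Hs) as [u [Hwu Hu]].
  apply (ksat_nat_down V t u w Hwu Hu).
  intros k Hk; exact (ksat_top_vars _ _ _ _ _ Hs (Hincl k Hk)).
Qed.

Section Frontier.
Context {P : spform -> Prop} (P_dec : forall a, {P a} + {~ P a}).

Fixpoint frontier (s : spform) : list spform :=
  match s with
  | SAnd a b => frontier a ++ frontier b
  | SDia a => if P_dec a then [a] else frontier a
  | _ => []
  end.

Fixpoint chain_labels (s : spform) : list (list nat) :=
  match s with
  | SAnd a b => chain_labels a ++ chain_labels b
  | SDia a => if P_dec a then [] else top_vars a :: chain_labels a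
  | _ => []
  end.

Lemma in_frontier s u : In u (frontier s) -> P u.
Proof.
  induction s as [n| |a IHa b IHb|a IHa]; simpl; try contradiction.
  - intros Hu; apply in_app_or in Hu as [Hu|Hu]; auto.
  - destruct (P_dec a) as [Ha|Ha]; [intros [<-|[]]|]; auto.
Qed.

Lemma in_chain_labels s L : In L (chain_labels s) -> exists a, ~ P a /\ L = top_vars a.
Proof.
  induction s as [n| |a IHa b IHb|a IHa]; simpl; try contradiction.
  - intros HL; apply in_app_or in HL as [HL|HL]; auto.
  - destruct (P_dec a) as [Ha|Ha]; [contradiction|].
    intros [<-|HL]; eauto.
Qed.

Lemma ksat_chain_labels s : forall V i j K,
  i <= j -> j + length (chain_labels s) <= K ->
  (forall k, In k (top_vars s) -> V k i) ->
  (forall m k, In k (nth m (chain_labels s) []) -> V k (j + m)) ->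
  (forall u, In u (frontier s) -> exists v, K <= v /\ ksat nat_chain V v u) ->
  ksat nat_chain V i s.
Proof.
  induction s as [n| |a IHa b IHb|a IHa]; simpl; intros V i j K Hij HK Htop Hlab Hfr.
  - apply Htop; now left.
  - exact I.
  - rewrite length_app in HK. split.
    + apply (IHa V i j K); try lia.
      * intros k Hk; apply Htop, in_or_app; auto.
      * intros m k Hk. apply Hlab.
        destruct (Nat.lt_ge_cases m (length (chain_labels a))).
        -- now rewrite app_nth1.
        -- rewrite nth_overflow in Hk by assumption. destruct Hk.
      * intros u Hu; apply Hfr, in_or_app; auto.
    + apply (IHb V i (j + length (chain_labels a)) K); try lia.
      * intros k Hk; apply Htop, in_or_app; auto.
      * intros m k Hk. rewrite <- Nat.add_assoc. apply Hlab.
        now rewrite app_nth2_plus.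
      * intros u Hu; apply Hfr, in_or_app; auto.
  - destruct (P_dec a) as [Ha|Ha]; simpl in *.
    + destruct (Hfr a (or_introl eq_refl)) as [v [HKv Hv]].
      exists v; split; [lia|exact Hv].
    + exists j; split; [exact Hij|].
      apply (IHa V j (S j) K); try lia.
      * intros k Hk. rewrite <- (Nat.add_0_r j). now apply (Hlab 0).
      * intros m k Hk. rewrite Nat.add_succ_l, <- Nat.add_succ_r. now apply (Hlab (S m)).
      * intros u Hu; apply Hfr; exact Hu.
Qed.

Section Prefix.
Variables (s : spform) (V : nat -> nat -> Prop) (w : nat).

(* A model of [s] at world 0: the worlds below [prefix_len] spell out [s] down to its
   frontier, and above them sits a copy of [V] from [w] on, in which the frontier is realised. *)
Definition prefix_len : nat := S (length (chain_labels s)).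

Definition prefix_label (x : nat) : list nat :=
  match x with 0 => top_vars s | S m => nth m (chain_labels s) [] end.

Definition prefixed_val (k x : nat) : Prop :=
  (x < prefix_len /\ In k (prefix_label x)) \/
  (prefix_len <= x /\ V k (w + (x - prefix_len))).

Lemma prefixed_val_shift k x :
  prefix_len <= x -> prefixed_val k x <-> V k (w + (x - prefix_len)).
Proof. unfold prefixed_val; intros Hx; split; [intros [[? _]|[_ ?]]; [lia|assumption]|auto]. Qed.

Lemma prefixed_val_below k x : x < prefix_len -> prefixed_val k x -> In k (prefix_label x).
Proof. unfold prefixed_val; intros Hx [[_ Hk]|[? _]]; [exact Hk|lia]. Qed.

Lemma prefix_label_cases x :
  x < prefix_len -> prefix_label x = top_vars s \/ exists a, ~ P a /\ prefix_label x = top_vars a.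
Proof.
  unfold prefix_len; destruct x as [|m]; simpl; intros Hm; [now left|right].
  apply (in_chain_labels s), nth_In; lia.
Qed.

Lemma ksat_prefixed :
  (forall u, In u (frontier s) -> exists v, w <= v /\ ksat nat_chain V v u) ->
  ksat nat_chain prefixed_val 0 s.
Proof.
  intros Hfr. apply (ksat_chain_labels s prefixed_val 0 1 prefix_len); unfold prefix_len; try lia.
  - intros k Hk; left; split; [unfold prefix_len; lia|exact Hk].
  - intros m k Hk. left; split; [|exact Hk].
    destruct (Nat.lt_ge_cases m (length (chain_labels s))); [unfold prefix_len; lia|].
    rewrite nth_overflow in Hk by assumption. destruct Hk.
  - intros u Hu. destruct (Hfr u Hu) as [v [Hwv Hv]].
    exists (prefix_len + (v - w)). split; [unfold prefix_len; lia|].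
    apply (ksat_nat_shift V prefixed_val prefix_len w prefixed_val_shift); [lia|].
    now replace (w + (prefix_len + (v - w) - prefix_len)) with v by lia.
Qed.

End Prefix.
End Frontier.

Lemma nat_entails_var s k : nat_entails s (SVar k) -> In k (top_vars s).
Proof.
  intros Hs.
  (* With an empty frontier the prefixed valuation is a model of [s] whose world 0 carries
     only the top-level variables of [s]. *)
  set (never_dec := fun _ : spform => right (fun f : False => f) : {False} + {~ False}).
  apply (prefixed_val_below never_dec s (fun _ _ => False) 0 k 0); [unfold prefix_len; lia|].
  apply Hs, ksat_prefixed. intros u Hu. destruct (in_frontier never_dec s u Hu).
Qed.

Lemma nat_entails_dia_frontier s t :
  ~ incl (top_vars t) (top_vars s) -> nat_entails s (SDia t) ->
  forall V w, (forall u, In u (frontier (top_vars_incl_dec t) s) ->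
                exists v, w <= v /\ ksat nat_chain V v u) ->
  exists u, w <= u /\ ksat nat_chain V u t.
Proof.
  intros Hroot Hst V w Hfr.
  set (dec := top_vars_incl_dec t) in *.
  destruct (Hst _ 0 (ksat_prefixed dec s V w Hfr)) as [x [_ Hx]].
  destruct (Nat.lt_ge_cases x (prefix_len dec s)) as [Hlow|Hhigh].
  - exfalso.
    assert (Hincl : incl (top_vars t) (prefix_label dec s x)).
    { intros k Hk. apply (prefixed_val_below dec s V w k x Hlow).
      exact (ksat_top_vars _ _ _ _ _ Hx Hk). }
    destruct (prefix_label_cases dec s x Hlow) as [E|[a [Ha E]]];
      rewrite E in Hincl; contradiction.
  - exists (w + (x - prefix_len dec s)). split; [lia|].
    now apply (ksat_nat_shift V _ _ w (prefixed_val_shift dec s V w)).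
Qed.

Lemma frontier_nonempty s t :
  ~ incl (top_vars t) (top_vars s) -> nat_entails s (SDia t) ->
  frontier (top_vars_incl_dec t) s <> [].
Proof.
  intros Hroot Hst Hnil.
  destruct (nat_entails_dia_frontier s t Hroot Hst (fun _ _ => False) 0) as [u [_ Hu]].
  - rewrite Hnil; intros u [].
  - clear Hnil. destruct (top_vars t) as [|k Q] eqn:E.
    + apply Hroot; intros k [].
    + apply (ksat_top_vars _ _ _ _ k Hu). rewrite E; now left.
Qed.

Lemma nat_entails_frontier s t :
  ~ incl (top_vars t) (top_vars s) -> nat_entails s (SDia t) ->
  nat_entails (SAnd (conj_vars (top_vars t)) (conj_dia (frontier (top_vars_incl_dec t) s))) t.
Proof.
  intros Hroot Hst V w [HQ Hfr].
  destruct (nat_entails_dia_frontier s t Hroot Hst V w) as [u [Hwu Hu]].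
  - intros u Hu; exact (ksat_conj_dia nat_chain V w _ u Hfr Hu).
  - apply (ksat_nat_down V t u w Hwu Hu).
    intros k Hk. apply (ksat_top_vars _ _ _ _ _ HQ). now rewrite top_vars_conj_vars.
Qed.

Section SLOTheory.
Variable A : SLO.

Local Infix "⊑" := (sle A) (at level 70).
Local Infix "⊓" := (smeet A) (at level 40, left associativity).
Local Notation "◇ x" := (sdia A x) (at level 35, right associativity).

Lemma sle_refl x : x ⊑ x.
Proof. apply smeetI. Qed.

Lemma sle_trans x y z : x ⊑ y -> y ⊑ z -> x ⊑ z.
Proof. unfold sle; intros Hxy Hyz. now rewrite <- Hxy, <- smeetA, Hyz. Qed.

Lemma sle_meetl x y : x ⊓ y ⊑ x.
Proof. unfold sle. now rewrite (smeetC A x y), <- smeetA, smeetI. Qed.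

Lemma sle_meetr x y : x ⊓ y ⊑ y.
Proof. unfold sle. now rewrite <- smeetA, smeetI. Qed.

Lemma sle_meet x y z : z ⊑ x -> z ⊑ y -> z ⊑ x ⊓ y.
Proof. unfold sle; intros Hx Hy. now rewrite smeetA, Hx. Qed.

Lemma sle_top x : x ⊑ stop A.
Proof. apply smeet_top. Qed.

Lemma sle_dia x y : x ⊑ y -> ◇ x ⊑ ◇ y.
Proof. apply sdia_mono. Qed.

Fixpoint meet_dias (ys : list (car A)) : car A :=
  match ys with [] => stop A | y :: ys' => ◇ y ⊓ meet_dias ys' end.

Hypothesis lin_valid : forall j, In j Sigma_lin -> slo_valid A j.

Lemma sle_dia_refl x : x ⊑ ◇ x.
Proof. exact (lin_valid _ (or_introl eq_refl) (fun _ => x)). Qed.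

Lemma sle_dia_dia x : ◇ ◇ x ⊑ ◇ x.
Proof. exact (lin_valid _ (or_intror (or_introl eq_refl)) (fun _ => x)). Qed.

Lemma sle_dia_lin p q r : ◇ (p ⊓ q) ⊓ ◇ (p ⊓ r) ⊑ ◇ (p ⊓ (◇ q ⊓ ◇ r)).
Proof.
  exact (lin_valid _ (or_intror (or_intror (or_introl eq_refl)))
           (fun n => match n with 0 => p | 1 => q | _ => r end)).
Qed.

Lemma meet_dias_dia ys : ◇ meet_dias ys ⊑ meet_dias ys.
Proof.
  induction ys as [|y ys IH]; simpl; [apply sle_top|].
  apply sle_meet.
  - eapply sle_trans; [apply sle_dia, sle_meetl|apply sle_dia_dia].
  - eapply sle_trans; [apply sle_dia, sle_meetr|exact IH].
Qed.

Lemma sle_dia_meet_dias x p ys :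
  ys <> [] -> (forall y, In y ys -> x ⊑ ◇ y /\ y ⊑ p) -> x ⊑ ◇ (p ⊓ meet_dias ys).
Proof.
  induction ys as [|y ys IH]; intros Hne Hys; [contradiction|].
  destruct (Hys y (or_introl eq_refl)) as [Hxy Hyp].
  assert (Hy : x ⊑ ◇ (p ⊓ y)).
  { eapply sle_trans; [exact Hxy|]. apply sle_dia, sle_meet; [exact Hyp|apply sle_refl]. }
  simpl. destruct ys as [|y' ys'].
  - eapply sle_trans; [exact Hy|]. apply sle_dia, sle_meet; [apply sle_meetl|].
    apply sle_meet; [|apply sle_top].
    eapply sle_trans; [apply sle_meetr|apply sle_dia_refl].
  - assert (Hrest := IH ltac:(discriminate) (fun u Hu => Hys u (or_intror Hu))).
    eapply sle_trans; [apply (sle_meet _ _ _ Hy Hrest)|].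
    eapply sle_trans; [apply sle_dia_lin|].
    apply sle_dia, sle_meet; [apply sle_meetl|].
    apply sle_meet.
    + eapply sle_trans; [apply sle_meetr|apply sle_meetl].
    + eapply sle_trans; [apply sle_meetr|].
      eapply sle_trans; [apply sle_meetr|apply meet_dias_dia].
Qed.

Variable a : nat -> car A.
Local Notation ev := (seval A a).

Lemma sle_top_vars s k : In k (top_vars s) -> ev s ⊑ a k.
Proof.
  induction s as [n| |s1 IH1 s2 IH2|s1 IH1]; simpl; try contradiction.
  - intros [<-|[]]; apply sle_refl.
  - intros Hk; apply in_app_or in Hk as [Hk|Hk].
    + eapply sle_trans; [apply sle_meetl|auto].
    + eapply sle_trans; [apply sle_meetr|auto].
Qed.

Lemma sle_conj_vars x Q : (forall k, In k Q -> x ⊑ a k) -> x ⊑ ev (conj_vars Q).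
Proof.
  induction Q as [|k Q IH]; simpl; intros HQ; [apply sle_top|].
  apply sle_meet; auto.
Qed.

Lemma seval_conj_dia l : ev (conj_dia l) = meet_dias (map ev l).
Proof. induction l as [|u l IH]; simpl; [reflexivity|now rewrite IH]. Qed.

Lemma sle_frontier {P : spform -> Prop} (P_dec : forall a, {P a} + {~ P a}) s u :
  In u (frontier P_dec s) -> ev s ⊑ ◇ ev u.
Proof.
  induction s as [n| |s1 IH1 s2 IH2|s1 IH1]; simpl; try contradiction.
  - intros Hu; apply in_app_or in Hu as [Hu|Hu].
    + eapply sle_trans; [apply sle_meetl|auto].
    + eapply sle_trans; [apply sle_meetr|auto].
  - destruct (P_dec s1).
    + intros [<-|[]]; apply sle_refl.
    + intros Hu. eapply sle_trans; [apply sle_dia, IH1, Hu|apply sle_dia_dia].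
Qed.

Theorem nat_entails_sle t : forall s, nat_entails s t -> ev s ⊑ ev t.
Proof.
  induction t as [k| |t1 IH1 t2 IH2|t IH]; intros s Hst; simpl.
  - apply sle_top_vars, nat_entails_var, Hst.
  - apply sle_top.
  - apply sle_meet; [apply IH1|apply IH2]; intros V w Hs; apply (Hst V w Hs).
  - destruct (top_vars_incl_dec t s) as [Hincl|Hroot].
    + eapply sle_trans; [apply IH, nat_entails_dia_incl, Hst; exact Hincl|apply sle_dia_refl].
    + eapply sle_trans; [|apply sle_dia, IH, (nat_entails_frontier s t Hroot Hst)].
      simpl; rewrite seval_conj_dia. apply sle_dia_meet_dias.
      * intros Hnil; apply map_eq_nil in Hnil. exact (frontier_nonempty s t Hroot Hst Hnil).
      * intros y Hy; apply in_map_iff in Hy as [u [<- Hu]]. split.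
        -- exact (sle_frontier _ s u Hu).
        -- apply sle_conj_vars; intros k Hk. apply sle_top_vars, (in_frontier _ s u Hu), Hk.
Qed.

End SLOTheory.

Lemma nat_chain_valid_lin j : In j Sigma_lin -> frame_valid nat_chain j.
Proof.
  intros [<-|[<-|[<-|[]]]]; intros V w; simpl.
  - intros Hp. exists w; split; [lia|exact Hp].
  - intros [u [Hwu [v [Huv Hv]]]]. exists v; split; [lia|exact Hv].
  - intros [[u [Hwu [Hpu Hqu]]] [v [Hwv [Hpv Hrv]]]].
    destruct (Nat.le_ge_cases u v) as [Huv|Hvu].
    + exists u; repeat split; auto; [exists u|exists v]; auto.
    + exists v; repeat split; auto; [exists u|exists v]; auto.
Qed.

Definition powerset_slo (F : frame) : SLO.
Proof.
  refine (MkSLO (world F -> Prop) (fun X Y w => X w /\ Y w) (fun _ => True)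
            (fun X w => exists v, rel F w v /\ X v) _ _ _ _ _);
    intros; apply functional_extensionality; intro w; apply propositional_extensionality;
    try tauto.
  split; [tauto|]. intros [v [Hwv Hv]].
  split; exists v; split; auto. rewrite <- H in Hv; tauto.
Defined.

Lemma sle_powerset F (X Y : world F -> Prop) :
  sle (powerset_slo F) X Y <-> forall w, X w -> Y w.
Proof.
  unfold sle; simpl; split.
  - intros E w Hw. rewrite <- E in Hw. tauto.
  - intros HXY. apply functional_extensionality; intro w.
    apply propositional_extensionality. split; [tauto|auto].
Qed.

Lemma seval_powerset F V s w : seval (powerset_slo F) V s w <-> ksat F V w s.
Proof.
  revert w; induction s as [n| |a IHa b IHb|a IHa]; intros w; simpl; try tauto.
  - now rewrite IHa, IHb.
  - split; intros [v [Hwv Hv]]; exists v; split; auto; apply IHa; auto.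
Qed.

Lemma slo_valid_powerset F i : slo_valid (powerset_slo F) i <-> frame_valid F i.
Proof.
  unfold slo_valid, frame_valid. split.
  - intros H V w Hw. apply seval_powerset, (proj1 (sle_powerset _ _ _) (H V)).
    now apply seval_powerset.
  - intros H V. apply sle_powerset; intros w Hw.
    now apply seval_powerset, H, seval_powerset.
Qed.

Theorem theorem7p12 : complete Sigma_lin.
Proof.
  intros i; split.
  - intros HK A HA a. apply nat_entails_sle; [exact HA|].
    exact (HK nat_chain nat_chain_valid_lin).
  - intros HS F HF. apply slo_valid_powerset, HS.
    intros j Hj. apply slo_valid_powerset, HF, Hj.
Qed.
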